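(* Let $L=\{(x,\,y,\,y+z): x,y\in B,\ z\in C_8\}\subset E^{24}$. Then $L$ is contained in the set of even-weight words, and $\chi_L$ is a perfect coloring of the halved cube $\tfrac12 H^{0}_{24}$ with parameters $((28,248)(8,268))$.
   Context: $E^n$ is the set of binary words of length $n$ with coordinatewise addition mod $2$. $\tfrac12 H^{0}_{24}$ is the graph on the even-weight words of $E^{24}$, adjacent iff at Hamming distance exactly $2$ (degree $276$). $B\subset E^8$ is the set of even-weight words of length $8$ (the $(8,128,2)$-code containing $00000000$). $C_8\subset E^8$ is the linear span of $11111111$ and of the seven words obtained from $00101110$ by cyclically permuting its first seven coordinates (a linear $(8,16,4)$-code). (The paper writes $C_1$ in the definition of $L$; it denotes an $(8,16,4)$-code such as $C_8$.) For a set $C$, $\chi_C$ is a perfect coloring with parameters $((a,b)(c,d))$ if every vertex of $C$ has exactly $a$ neighbours in $C$ and $b$ outside, and every vertex outside $C$ has exactly $c$ neighbours in $C$ and $d$ outside. *)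

From mathcomp Require Import all_boot.
Set Implicit Arguments. Unset Strict Implicit. Unset Printing Implicit Defensive.

Definition word (n : nat) := {ffun 'I_n -> bool}.

Definition wt n (x : word n) : nat := #|[set i | x i]|.
Definition dist n (x y : word n) : nat := #|[set i | x i != y i]|.
Definition wadd n (x y : word n) : word n := [ffun i => x i (+) y i].
Definition zero_word n : word n := [ffun => false].

(* even-weight words of E^n (vertex set of the halved cube) *)
Definition Even n : {set word n} := [set x | ~~ odd (wt x)].

Definition halved_adj n (x y : word n) : bool := dist x y == 2.

Definition B : {set word 8} := Even 8.

Definition of_bits n (s : seq bool) : word n := [ffun i : 'I_n => nth false s i].

(* 00101110 with its first seven coordinates cyclically shifted k times *)
Definition gen_base : seq bool := [:: false; false; true; false; true; true; true; false].
Definition cyc_gen (k : 'I_7) : word 8 :=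
  [ffun i : 'I_8 => if i < 7 then nth false gen_base ((i + k) %% 7) else nth false gen_base 7].
Definition all_ones n : word n := [ffun => true].

Definition gens : seq (word 8) := all_ones 8 :: [seq cyc_gen k | k <- enum 'I_7].

Definition span_of n (g : seq (word n)) : {set word n} :=
  [set x | [exists m : (size g).-tuple bool,
     x == foldr (@wadd n) (zero_word n) (mask m g)]].

Definition C8 : {set word 8} := span_of gens.

Definition cat3 (x y w : word 8) : word 24 :=
  [ffun i : 'I_24 => if i < 8 then x (inord i)
                     else if i < 16 then y (inord (i - 8)) else w (inord (i - 16))].

Definition L : {set word 24} :=
  [set v | [exists x in B, exists y in B, exists z in C8, v == cat3 x y (wadd y z)]].

Definition perfect_coloring (T : finType) (V : {set T}) (adj : rel T)
    (C : {set T}) (a b c d : nat) : Prop :=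
  C \subset V /\
  (forall v, v \in V -> v \in C ->
     #|[set u in V | adj v u & u \in C]| = a /\
     #|[set u in V | adj v u & u \notin C]| = b) /\
  (forall v, v \in V -> v \notin C ->
     #|[set u in V | adj v u & u \in C]| = c /\
     #|[set u in V | adj v u & u \notin C]| = d).

From mathcomp Require Import all_boot zify.
Set Implicit Arguments. Unset Strict Implicit. Unset Printing Implicit Defensive.

(* Every code in the statement is the common kernel of a few
   parity checks, where a check c (a list of positions) sends a word x to the
   sum mod 2 of the coordinates of x listed in c.
   - C8 is cut out by four checks (C8_kernel); splitting a word of E^24 into
     three blocks of length 8, L is then cut out by six checks (L_kernel), and
     the sum of the first and third of them is the total weight parity, so
     L is contained in the even-weight words (L_sub_Even).
   - The neighbours of an even word v in the halved cube are exactly the words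
     flip v (i, j) = v + e_i + e_j with i < j, each obtained once
     (neighbours_card).  By linearity, flip v (i, j) lies in L iff the
     syndrome of v (its vector of six check values) is the sum of the
     syndromes of e_i and e_j (flip_kernel).
   - Hence the number of neighbours of v inside L depends only on the
     syndrome of v; a finite computation over the 32 syndromes of even words
     gives 28 for the zero syndrome (v in L) and 8 otherwise
     (L_split_count).  Out of the 276 neighbours, 248 resp. 268 remain. *)

Lemma wadd_cancel n (y z : word n) : wadd y (wadd y z) = z.
Proof. by apply/ffunP => i; rewrite !ffunE addKb. Qed.

Definition unit_word n (i : 'I_n) : word n := [ffun k => k == i].

Section Parity.
Variable n : nat.
Implicit Types (x y : word n.+1) (c : seq nat).

Definition parity c x : bool := foldr (fun k b => x (inord k) (+) b) false c.

Lemma parityE c x : parity c x = odd (count (fun k => x (inord k)) c).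
Proof. by elim: c => //= k c ->; rewrite oddD; case: (x _). Qed.

Lemma parity_wadd c x y : parity c (wadd x y) = parity c x (+) parity c y.
Proof. by elim: c => //= k c ->; rewrite ffunE addbACA. Qed.

Lemma parity_zero c : parity c (zero_word n.+1) = false.
Proof. by elim: c => //= k c ->; rewrite ffunE. Qed.

Lemma parity_cat c1 c2 x : parity (c1 ++ c2) x = parity c1 x (+) parity c2 x.
Proof. by elim: c1 => //= k c ->; rewrite addbA. Qed.

Lemma odd_wt x : odd (wt x) = parity (iota 0 n.+1) x.
Proof.
rewrite parityE /wt cardsE cardE size_filter -enumT -val_enum_ord count_map.
by congr odd; apply: eq_count => i /=; rewrite inord_val.
Qed.

Lemma parity_unit c (i : 'I_n.+1) :
  all (gtn n.+1) c -> parity c (unit_word i) = odd (count_mem (val i) c).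
Proof.
elim: c => //= k c IH /andP[lt_k lt_c]; rewrite IH // ffunE oddD.
by rewrite -(inj_eq val_inj) /= inordK // oddb.
Qed.
End Parity.

Definition kernel n (cs : seq (seq nat)) : {set word n.+1} :=
  [set x | all (fun c => ~~ parity c x) cs].
Arguments kernel {n} cs.

Definition syndrome n (cs : seq (seq nat)) (v : word n.+1) : seq bool :=
  [seq parity c v | c <- cs].

(* The syndrome s is the sum of the syndromes of e_i and e_j. *)
Definition splits (cs : seq (seq nat)) (s : seq bool) (i j : nat) : bool :=
  all2 (fun b c => b == odd (count_mem i c) (+) odd (count_mem j c)) s cs.

Definition flip n (v : word n) (p : 'I_n * 'I_n) : word n :=
  wadd v (wadd (unit_word p.1) (unit_word p.2)).

Section Flips.
Variable n : nat.
Implicit Types (v u : word n) (p q : 'I_n * 'I_n).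

Lemma flip_diff v p : p.1 != p.2 -> [set i | v i != flip v p i] = [set p.1; p.2].
Proof.
move=> p12; apply/setP => k.
have neq_addb (a b : bool) : (a != a (+) b) = b by case: a; case: b.
rewrite !inE !ffunE neq_addb.
by case: (eqVneq k p.1) => [->|] //=; rewrite (negbTE p12).
Qed.

Lemma flipC v (i j : 'I_n) : flip v (i, j) = flip v (j, i).
Proof. by apply/ffunP => k; rewrite !ffunE /= [(_ == i) (+) _]addbC. Qed.

Lemma ordered_pair_inj p q :
  p.1 < p.2 -> q.1 < q.2 -> [set p.1; p.2] = [set q.1; q.2] -> p = q.
Proof.
case: p q => [a b] [c d] /= ab cd E.
have : a \in [set c; d] by rewrite -E set21.
have : b \in [set c; d] by rewrite -E set22.
have : c \in [set a; b] by rewrite E set21.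
rewrite !inE -!(inj_eq (@ord_inj n)) => /orP[]/eqP ? /orP[]/eqP ? /orP[]/eqP ?;
  apply/eqP; rewrite xpair_eqE -!(inj_eq (@ord_inj n)); apply/andP; split; apply/eqP; lia.
Qed.

Lemma flip_inj v p q : p.1 < p.2 -> q.1 < q.2 -> flip v p = flip v q -> p = q.
Proof.
move=> lt_p lt_q fpq; apply: ordered_pair_inj => //.
have ne (r : 'I_n * 'I_n) : r.1 < r.2 -> r.1 != r.2.
  by move=> lt; rewrite -(inj_eq (@ord_inj n)) neq_ltn lt.
by rewrite -(flip_diff v (ne p lt_p)) -(flip_diff v (ne q lt_q)) fpq.
Qed.

Lemma flip_adj v p : p.1 != p.2 -> halved_adj v (flip v p).
Proof. by move=> p12; rewrite /halved_adj /dist flip_diff // cards2 p12. Qed.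

Lemma adj_flip v u : halved_adj v u -> exists2 p : 'I_n * 'I_n, p.1 < p.2 & u = flip v p.
Proof.
move=> /cards2P[i [j [ij Dij]]].
have Du : u = flip v (i, j).
  apply/ffunP => k; move/setP/(_ k): Dij; rewrite !inE !ffunE /=.
  case: (eqVneq k i) => [->|_]; rewrite ?(negbTE ij) /= => <-;
    by case: (v _); case: (u _).
case: (ltngtP i j) => [lt|gt|eq]; first by exists (i, j).
  by exists (j, i); rewrite // -flipC.
by move: ij; rewrite -(inj_eq (@ord_inj n)) eq eqxx.
Qed.
End Flips.

Section HalvedCube.
Variable n : nat.
Implicit Types (v : word n.+1) (p : 'I_n.+1 * 'I_n.+1) (cs : seq (seq nat)).

Lemma kernel_syndrome cs v : (v \in kernel cs) = all negb (syndrome cs v).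
Proof. by rewrite inE all_map. Qed.

Lemma kernel_zero cs : zero_word n.+1 \in kernel cs.
Proof. by rewrite inE; apply/allP => c _; rewrite parity_zero. Qed.

Lemma kernel_wadd cs : {in @kernel n cs &, forall x y, wadd x y \in kernel cs}.
Proof.
move=> x y; rewrite !inE => /allP kx /allP ky; apply/allP => c ccs.
by rewrite parity_wadd (negbTE (kx c ccs)) (negbTE (ky c ccs)).
Qed.

Lemma flip_kernel cs v p : all (all (gtn n.+1)) cs ->
  (flip v p \in kernel cs) = splits cs (syndrome cs v) p.1 p.2.
Proof.
rewrite inE; elim: cs => //= c cs IH /andP[lt_c lt_cs].
by rewrite IH // !parity_wadd !parity_unit // negb_add.
Qed.

Lemma even_flip v p : (flip v p \in Even n.+1) = (v \in Even n.+1).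
Proof.
have lt_iota : all (gtn n.+1) (iota 0 n.+1) by apply/allP => k; rewrite mem_iota.
have count1 (i : 'I_n.+1) : count_mem (val i) (iota 0 n.+1) = 1.
  by rewrite count_uniq_mem ?iota_uniq // mem_iota ltn_ord.
by rewrite !inE !odd_wt !parity_wadd !parity_unit // !count1 addbb addbF.
Qed.

Lemma neighbours_card v (P : pred (word n.+1)) : v \in Even n.+1 ->
  #|[set u in Even n.+1 | halved_adj v u & P u]| =
  #|[set p : 'I_n.+1 * 'I_n.+1 | (p.1 < p.2) && P (flip v p)]|.
Proof.
move=> ev; rewrite -(card_in_imset (f := flip v)); last first.
  by move=> p q; rewrite !inE => /andP[lt_p _] /andP[lt_q _]; apply: flip_inj.
apply: eq_card => u; rewrite inE; apply/idP/imsetP.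
  case/and3P=> _ /adj_flip[p lt_p ->] Pu.
  by exists p; rewrite // inE lt_p.
case=> p; rewrite inE => /andP[lt_p Pp] ->.
have p12 : p.1 != p.2 by rewrite -(inj_eq (@ord_inj n.+1)) neq_ltn lt_p.
by rewrite even_flip ev flip_adj.
Qed.
End HalvedCube.

(* Counting pairs of positions, in a form that can be evaluated. *)
Lemma card_pairs n (q : nat -> nat -> bool) :
  #|[set p : 'I_n * 'I_n | q p.1 p.2]| =
  count (fun ij => q ij.1 ij.2) [seq (i, j) | i <- iota 0 n, j <- iota 0 n].
Proof.
pose F (i j : 'I_n) := if q i j then 1 else 0.
rewrite -sum1_count [in RHS]big_mkcond big_allpairs_dep -val_enum_ord.
rewrite -sum1_card [in LHS]big_mkcond (eq_bigr (fun p => F p.1 p.2)) => [|p _]; last by rewrite inE.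
rewrite -(pair_bigA _ F) (big_map val xpredT) big_enum; apply: eq_bigr => i _.
by rewrite (big_map val xpredT) big_enum.
Qed.

Lemma card_split (T : finType) (a b : pred T) :
  #|[set x | a x && b x]| + #|[set x | a x && ~~ b x]| = #|[set x | a x]|.
Proof.
rewrite -(cardsID [set x | b x] [set x | a x]).
by congr (_ + _); apply: eq_card => x; rewrite !inE // andbC.
Qed.

(* C8 is the kernel of the checks on all positions and on the supports
   {2,4,5,6}, {1,3,4,5}, {0,2,3,4} of three words of the dual code. *)
Definition C8_checks : seq (seq nat) :=
  [:: iota 0 8; [:: 2; 4; 5; 6]; [:: 1; 3; 4; 5]; [:: 0; 2; 3; 4]].

Lemma span_closed n (g : seq (word n)) (K : {set word n}) :
  zero_word n \in K -> {in K &, forall x y, wadd x y \in K} -> {subset g <= K} ->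
  span_of g \subset K.
Proof.
move=> K0 KD gK; apply/subsetP => y; rewrite inE => /existsP[m /eqP ->].
have : {subset mask m g <= K} by move=> x /mem_mask; apply: gK.
elim: (mask m g) => //= x s IH sK.
by apply: KD; [apply: sK; rewrite mem_head | apply: IH => z zs; apply: sK; rewrite inE zs orbT].
Qed.

Lemma span_coord n (m : seq bool) (g : seq (word n)) i :
  foldr (@wadd n) (zero_word n) (mask m g) i =
  foldr (fun (bx : bool * word n) b => (bx.1 && bx.2 i) (+) b) false (zip m g).
Proof. by elim: g m => [|x g IH] [|[] m] //=; rewrite ?ffunE ?IH. Qed.

Lemma gensE : gens = all_ones 8 :: [seq cyc_gen (inord k) | k <- iota 0 7].
Proof.
rewrite /gens -val_enum_ord -map_comp; congr (_ :: _).
by apply: eq_map => k /=; rewrite inord_val.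
Qed.

Lemma gens_kernel : {subset gens <= kernel C8_checks}.
Proof.
rewrite gensE => g; rewrite inE => /orP[/eqP ->|/mapP[k]]; first by rewrite inE /= !ffunE.
rewrite mem_iota => /andP[_ lt_k] ->.
by case: k lt_k => [|[|[|[|[|[|[|//]]]]]]] _; rewrite inE /= !ffunE !inordK.
Qed.

(* Conversely, a word z passing the checks is the combination of the all-ones
   word and the first three cyclic shifts with coefficients z0+z1+z3, z0+z2,
   z0+z3, z1+z3; this identity is verified coordinatewise on all 256 words. *)
Lemma kernel_C8_sub : kernel C8_checks \subset C8.
Proof.
apply/subsetP => z; rewrite !inE => checks; apply/existsP.
pose coefs := [:: z (inord 0) (+) z (inord 1) (+) z (inord 3); z (inord 0) (+) z (inord 2);
                  z (inord 0) (+) z (inord 3); z (inord 1) (+) z (inord 3);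
                  false; false; false; false].
have size_coefs : size coefs == size gens by rewrite /gens /= size_map size_enum_ord.
exists (Tuple size_coefs); apply/eqP/ffunP => i.
rewrite span_coord [tval _]/= gensE -[i]inord_val.
move: checks; case: i => [[|[|[|[|[|[|[|[|//]]]]]]]] _] /=; rewrite !ffunE !inordK //=;
  move: (z (inord 0)) (z (inord 1)) (z (inord 2)) (z (inord 3)) (z (inord 4))
    (z (inord 5)) (z (inord 6)) (z (inord 7));
  by do 8 case.
Qed.

Lemma C8_kernel : C8 = kernel C8_checks.
Proof.
apply/eqP; rewrite eqEsubset kernel_C8_sub andbT.
by apply: span_closed; [exact: kernel_zero | exact: kernel_wadd | exact: gens_kernel].
Qed.

Definition shift (o : nat) (c : seq nat) : seq nat := map (addn o) c.

Definition block (v : word 24) (o : nat) : word 8 := [ffun i : 'I_8 => v (inord (o + i))].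

Lemma parity_block (v : word 24) o c :
  all (gtn 8) c -> parity c (block v o) = parity (shift o c) v.
Proof. by elim: c => //= k c IH /andP[lt_k lt_c]; rewrite IH // ffunE inordK. Qed.

Lemma block_cat3 x y w :
  [/\ block (cat3 x y w) 0 = x, block (cat3 x y w) 8 = y & block (cat3 x y w) 16 = w].
Proof.
have coord o (i : 'I_8) : o <= 16 -> block (cat3 x y w) o i =
    if o + i < 8 then x (inord (o + i)) else if o + i < 16 then y (inord (o + i - 8))
    else w (inord (o + i - 16)).
  by move=> le_o; rewrite !ffunE inordK //; have := ltn_ord i; lia.
split; apply/ffunP => i; rewrite coord //; have lt_i := ltn_ord i.
- by rewrite add0n lt_i inord_val.
- have -> : (8 + i < 8) = false by lia.
  have -> : 8 + i < 16 by lia.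
  by rewrite addKn inord_val.
- have -> : (16 + i < 8) = false by lia.
  have -> : (16 + i < 16) = false by lia.
  by rewrite addKn inord_val.
Qed.

Lemma cat3_block v : cat3 (block v 0) (block v 8) (block v 16) = v.
Proof.
apply/ffunP => i; have lt_i := ltn_ord i; rewrite !ffunE.
case: ifP => [lt8|/negbT ge8]; first by rewrite inordK // add0n inord_val.
by case: ifP => [lt16|/negbT ge16]; rewrite inordK ?subnKC ?inord_val //; lia.
Qed.

(* v = (x, y, y + z) is in L iff x, y are even and z = y + (y + z) is in C8. *)
Lemma L_blocks v : (v \in L) =
  [&& block v 0 \in B, block v 8 \in B & wadd (block v 8) (block v 16) \in C8].
Proof.
apply/idP/idP.
  rewrite inE => /existsP[x /andP[Bx /existsP[y /andP[By /existsP[z /andP[Cz /eqP ->]]]]]].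
  by have [-> -> ->] := block_cat3 x y (wadd y z); rewrite Bx By wadd_cancel.
case/and3P => B0 B8 C; rewrite inE; apply/existsP; exists (block v 0); rewrite B0.
apply/existsP; exists (block v 8); rewrite B8.
by apply/existsP; exists (wadd (block v 8) (block v 16)); rewrite C wadd_cancel cat3_block eqxx.
Qed.

(* The six checks of L: weight parity of the first two blocks, and the checks
   of C8 applied to the sum of the last two blocks. *)
Definition L_checks : seq (seq nat) :=
  iota 0 8 :: shift 8 (iota 0 8) :: [seq shift 8 c ++ shift 16 c | c <- C8_checks].

Lemma L_kernel : L = kernel L_checks.
Proof.
apply/setP => v.
have inB o : (block v o \in B) = ~~ parity (shift o (iota 0 8)) v.
  by rewrite inE odd_wt parity_block.
have inC8 : (wadd (block v 8) (block v 16) \in C8) =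
    all (fun c => ~~ parity c v) [seq shift 8 c ++ shift 16 c | c <- C8_checks].
  rewrite C8_kernel inE all_map; apply: eq_in_all => c C8c.
  have lt_c : all (gtn 8) c by move: c C8c; apply/allP.
  by rewrite /= parity_wadd !parity_block // parity_cat.
have shift0 : shift 0 (iota 0 8) = iota 0 8 by [].
by rewrite L_blocks !inB shift0 inC8 inE.
Qed.

Lemma Even_checks v : (v \in Even 24) =
  (parity (iota 0 8) v == parity (shift 8 (iota 0 8) ++ shift 16 (iota 0 8)) v).
Proof.
rewrite inE odd_wt.
have -> : iota 0 24 = iota 0 8 ++ (shift 8 (iota 0 8) ++ shift 16 (iota 0 8)) by [].
by rewrite parity_cat negb_add.
Qed.

Lemma L_sub_Even : L \subset Even 24.
Proof.
apply/subsetP => v; rewrite L_kernel inE Even_checks => /and3P[p0 _ /andP[p2 _]].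
by rewrite (negbTE p0) (negbTE p2).
Qed.

Definition split_count (cs : seq (seq nat)) (n : nat) (s : seq bool) : nat :=
  count (fun ij => (ij.1 < ij.2) && splits cs s ij.1 ij.2)
    [seq (i, j) | i <- iota 0 n, j <- iota 0 n].

Lemma L_split_count s : size s = 6 -> nth false s 0 = nth false s 2 ->
  split_count L_checks 24 s = if all negb s then 28 else 8.
Proof.
case: s => [|s0 [|s1 [|s2 [|s3 [|s4 [|s5 [|? ?]]]]]]] // _ /= ->.
by case: s1; case: s2; case: s3; case: s4; case: s5; vm_compute.
Qed.

Lemma card_halved_pairs : #|[set p : 'I_24 * 'I_24 | p.1 < p.2]| = 276.
Proof. by rewrite (card_pairs 24 (fun i j => i < j)); vm_compute. Qed.

Lemma neighbour_counts v : v \in Even 24 ->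
  #|[set u in Even 24 | halved_adj v u & u \in L]| = (if v \in L then 28 else 8) /\
  #|[set u in Even 24 | halved_adj v u & u \notin L]| = (if v \in L then 248 else 268).
Proof.
move=> ev; rewrite !neighbours_card //.
have inL : #|[set p : 'I_24 * 'I_24 | (p.1 < p.2) && (flip v p \in L)]| =
    (if v \in L then 28 else 8).
  have s02 : nth false (syndrome L_checks v) 0 = nth false (syndrome L_checks v) 2.
    by move: ev; rewrite Even_checks => /eqP.
  rewrite L_kernel kernel_syndrome -(L_split_count _ s02) ?size_map //.
  rewrite /split_count -(card_pairs 24 (fun i j => (i < j) && splits L_checks _ i j)).
  by apply: eq_card => p; rewrite [LHS]inE [RHS]inE flip_kernel.
split=> //; have := card_split (fun p : 'I_24 * 'I_24 => p.1 < p.2) (fun p => flip v p \in L).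
rewrite inL card_halved_pairs.
by case: (v \in L) => [/(congr1 (subn^~ 28))|/(congr1 (subn^~ 8))]; rewrite addKn => ->.
Qed.

Theorem lemma5 :
  L \subset Even 24 /\
  perfect_coloring (Even 24) (@halved_adj 24) L 28 248 8 268.
Proof.
split; first exact: L_sub_Even.
split; first exact: L_sub_Even.
split=> v ev; have [-> ->] := neighbour_counts ev.
  by move=> ->.
by move=> /negbTE ->.
Qed.
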